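(* Let $\mathcal G$ be a finite, connected, simple bipartite graph with $N_{\mathcal V}$ vertices, each edge identified with $[0,1]$, and let $\mathcal L$ be the self-adjoint operator on $L^2(\mathcal G)$ described in the context. Then the eigenvalues $\lambda$ of $\mathcal L$ satisfy: (i) there are precisely $N_{\mathcal V}-2$ eigenvalues with $0<\lambda<\pi^2$, counted with multiplicity; (ii) there are precisely $N_{\mathcal V}-2$ eigenvalues with $\pi^2<\lambda<(2\pi)^2$, counted with multiplicity, and these have the form $\lambda=(2\pi-\sqrt{\mu})^2$ for $\mu$ an eigenvalue of $\mathcal L$ with $0<\mu<\pi^2$; moreover $\lambda$ and $\mu$ have the same multiplicity.
   Context: $L^2(\mathcal G)=\bigoplus_{e}L^2(e)$ with each $L^2(e)=L^2[0,1]$. The operator $\mathcal L$ acts by $-d^2/dx^2$ on each edge, with domain consisting of $f\in L^2(\mathcal G)$ that are continuous on $\mathcal G$, continuously differentiable on each edge with $f_e'$ absolutely continuous and $f''\in L^2(\mathcal G)$, and satisfying at every vertex $v$ the condition $\sum_{e\sim v}\partial_\nu f_e(v)=0$, where the sum is over edges incident on $v$ and $\partial_\nu$ is the outward derivative in the local coordinate identifying $e$ with $[0,1]$ and $v$ with $0$. *)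

From HB Require Import structures.
From mathcomp Require Import all_boot all_order all_algebra.
From mathcomp Require Import all_classical all_reals all_analysis.
Set Implicit Arguments. Unset Strict Implicit. Unset Printing Implicit Defensive.
Import Order.TTheory GRing.Theory Num.Theory.
Import numFieldNormedType.Exports.
Local Open Scope classical_set_scope.
Local Open Scope ring_scope.

(* A function on the metric graph is encoded as
   f : T -> T -> R -> R, where for adjacent u v, f u v x is the value at the
   point at distance x from u on the edge uv (local coordinate identifying
   the edge with [0,1] and u with 0). *)

Section QG.
Variables (R : realType) (T : finType) (e : rel T).

Definition gfun := T -> T -> R -> R.

Definition has_outder (f : gfun) (u v : T) (d : R) : Prop :=
  (fun h : R => (f u v h - f u v 0) / h) @ 0^'+ --> d.

(* f lies in the domain of the operator L and satisfies L f = lam f,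
   i.e. -f_e'' = lam f_e on every edge, plus continuity at the vertices
   and the Kirchhoff (standard) vertex conditions. *)
Definition in_eigspace (lam : R) (f : gfun) : Prop :=
  [/\ (forall u v, e u v -> forall x, 0 <= x <= 1 -> f u v x = f v u (1 - x)),
      (forall u v, e u v -> {within `[0, 1], continuous (f u v)}),
      (forall u v, e u v -> forall x, 0 < x < 1 ->
          [/\ derivable (f u v) x 1, derivable (derive1 (f u v)) x 1 &
              - derive1 (derive1 (f u v)) x = lam * f u v x]),
      (forall u v w, e u v -> e u w -> f u v 0 = f u w 0) &
      (exists d : T -> T -> R,
          (forall u v, e u v -> has_outder f u v (d u v)) /\
          (forall u, \sum_(v | e u v) d u v = 0))].

Definition gnonzero (f : gfun) : Prop :=
  exists u v x, [/\ e u v, 0 <= x <= 1 & f u v x != 0].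

Definition qg_eigenvalue (lam : R) : Prop :=
  exists f, in_eigspace lam f /\ gnonzero f.

Definition lin_indep (m : nat) (F : 'I_m -> gfun) : Prop :=
  forall c : 'I_m -> R,
    (forall u v x, e u v -> 0 <= x <= 1 -> \sum_(i < m) c i * F i u v x = 0) ->
    forall i, c i = 0.

Definition qg_mult (lam : R) (m : nat) : Prop :=
  (exists F : 'I_m -> gfun, (forall i, in_eigspace lam (F i)) /\ lin_indep F) /\
  (forall F : 'I_m.+1 -> gfun, (forall i, in_eigspace lam (F i)) -> ~ lin_indep F).

Definition qg_count (a b : R) (n : nat) : Prop :=
  exists s : seq (R * nat),
    [/\ uniq (map fst s),
        (forall x, (a < x < b /\ qg_eigenvalue x) <-> x \in map fst s),
        (forall p, p \in s -> qg_mult p.1 p.2) &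
        (\sum_(p <- s) p.2)%N = n].

End QG.

From HB Require Import structures.
From mathcomp Require Import all_boot all_order all_algebra.
From mathcomp Require Import all_classical all_reals all_analysis.
From mathcomp Require Import complex ring lra.
Import Order.TTheory GRing.Theory Num.Theory.
Import numFieldNormedType.Exports.
Set Implicit Arguments. Unset Strict Implicit. Unset Printing Implicit Defensive.
Local Open Scope classical_set_scope.
Local Open Scope ring_scope.

(* An eigenfunction with eigenvalue k^2, where k > 0 and sin k != 0, solves
   f'' = - k^2 f on each edge, so it is determined by its vertex values F: on
   the edge uv it is F u cos (k x) + (F v - F u cos k) / sin k * sin (k x).
   The Kirchhoff condition at u then says exactly that F is an eigenvector, for
   the eigenvalue cos k, of the transition matrix D^-1 A of the simple random
   walk, and this correspondence preserves linear independence.  D^-1 A is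
   similar to the real symmetric matrix D^-1/2 A D^-1/2, so it has #|T| real
   eigenvalues counted with multiplicity; they lie in [-1, 1], and 1 and -1 are
   simple because the graph is connected and bipartite.  Hence #|T| - 2 of them
   lie in (-1, 1), which cos parametrises bijectively by k in (0, pi) and also
   by k in (pi, 2 pi), the two parametrisations being related by k |-> 2 pi - k. *)

Lemma sum_count_undup (E : eqType) (r : seq E) :
  (\sum_(c <- undup r) count_mem c r)%N = size r.
Proof.
rewrite -(perm_size (perm_count_undup r)) size_flatten /shape -map_comp sumnE big_map.
by apply: eq_bigr => c _; rewrite /= size_nseq.
Qed.

Lemma rank_diag_mx (F : fieldType) n (d : 'rV[F]_n) :
  \rank (diag_mx d) = (\sum_(i < n) (d ord0 i != 0%R))%N.
Proof.
elim: n d => [|n IH] d; first by rewrite big_ord0; apply/eqP; rewrite -leqn0 rank_leq_row.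
rewrite -[n.+1]/(1 + n)%N in d *; rewrite -[d]hsubmxK diag_mx_row rank_diag_block_mx IH.
rewrite big_split_ord big_ord1 /= row_mxEl rank_rV; congr (_ + _)%N; last first.
  by apply: eq_bigr => i _; rewrite row_mxEr.
congr negb; apply/eqP/eqP => [/matrixP/(_ ord0 ord0) | l0].
  by rewrite !mxE eqxx mulr1n.
by move: l0; rewrite mxE => l0; apply/matrixP => i j; rewrite !ord1 !mxE l0 mul0rn.
Qed.

Lemma corank_diag_sub (F : fieldType) n (d : 'rV[F]_n) c :
  (n - \rank (diag_mx d - c%:M)%R)%N = (\sum_(i < n) (d ord0 i == c))%N.
Proof.
have -> : diag_mx d - c%:M = diag_mx (\row_i (d 0 i - c)).
  by apply/matrixP => i j; rewrite !mxE; case: eqP => _; rewrite ?mulr1n ?mulr0n ?subr0.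
rewrite rank_diag_mx; under eq_bigr => i _ do rewrite mxE subr_eq0.
have split_n : n = (\sum_(i < n) (d ord0 i != c) + \sum_(i < n) (d ord0 i == c))%N.
  by rewrite -big_split /=; under eq_bigr do rewrite addn_negb; rewrite sum1_card card_ord.
by rewrite {1}split_n addKn.
Qed.

Lemma mxrank_unitMM (F : fieldType) m n (P : 'M[F]_m) (A : 'M[F]_(m, n)) Q :
  P \in unitmx -> Q \in unitmx -> \rank (P *m A *m Q) = \rank A.
Proof.
move=> Pu Qu; rewrite mxrankMfree ?row_free_unit //.
have PA : (P *m A :=: A)%MS by apply: eqmxMfull; rewrite row_full_unit.
by case: PA.
Qed.

Lemma card_le1_edgeless (T : finType) (e : rel T) : irreflexive e ->
  (#|T| <= 1)%N -> forall u v, ~~ e u v.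
Proof.
move=> e_irr T_le1 u v; apply/negP => uv.
have uNv : u != v by apply: contraTneq uv => ->; rewrite e_irr.
have : (1 < #|T|)%N by apply/card_gt1P; exists u, v.
by rewrite ltnNge T_le1.
Qed.

Lemma connected_nodeg (T : finType) (e : rel T) : (forall u v, connect e u v) ->
  (1 < #|T|)%N -> forall u, exists v, e u v.
Proof.
move=> e_conn T_gt1 u.
have [v vNu] : exists v, v != u.
  case/card_gt1P: T_gt1 => x [y [_ _ xNy]].
  by have [xu|] := eqVneq x u; [exists y; rewrite -xu eq_sym | exists x].
case/connectP: (e_conn u v) => [[/= _ vu | w p /= /andP[uw _] _]]; last by exists w.
by rewrite vu eqxx in vNu.
Qed.

Lemma sqrtr_itv (R : rcfType) (a b x : R) : 0 <= a -> 0 <= b -> a ^+ 2 < x < b ^+ 2 ->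
  [/\ a < Num.sqrt x, Num.sqrt x < b & Num.sqrt x ^+ 2 = x].
Proof.
move=> a0 b0 /andP[ax xb]; have x0 : 0 <= x by apply: le_trans (ltW ax); apply: sqr_ge0.
have s0 := sqrtr_ge0 x; have sx := sqr_sqrtr x0.
by split=> //; rewrite -(@ltr_pXn2r _ 2) ?nnegrE // sx.
Qed.

Section Trigonometry.
Variable R : realType.

Lemma cos_2piB (y : R) : cos (2 * pi - y) = cos y.
Proof. by rewrite cosB mulr_natl cos2pi sin2pi mul1r mul0r addr0. Qed.

Lemma sin_2piB (y : R) : sin (2 * pi - y) = - sin y.
Proof. by rewrite sinB mulr_natl cos2pi sin2pi mul1r mul0r sub0r. Qed.

Lemma sin_neq0_0pi (y : R) : 0 < y < pi -> sin y != 0.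
Proof. by move=> y0pi; rewrite gt_eqF // sin_gt0_pi. Qed.

Lemma cos_gtN1_lt1 (y : R) : 0 < y < pi -> -1 < cos y < 1.
Proof.
move=> /andP[y0 ypi]; have y0pi : y \in `[0, pi] by rewrite in_itv /= !ltW.
have zero_in : (0 : R) \in `[0, pi] by rewrite in_itv /= lexx pi_ge0.
have pi_in : (pi : R) \in `[0, pi] by rewrite in_itv /= lexx pi_ge0.
rewrite !lt_neqAle cos_geN1 cos_le1 !andbT; apply/andP; split; apply/eqP => cy.
  by have := cos_inj pi_in y0pi; rewrite cospi cy => /(_ erefl) piy; rewrite piy ltxx in ypi.
by have := cos_inj y0pi zero_in; rewrite cos0 cy => /(_ erefl) y0'; rewrite y0' ltxx in y0.
Qed.

Lemma acos_itv (c : R) : -1 < c < 1 -> [/\ 0 < acos c, acos c < pi & cos (acos c) = c].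
Proof.
case/andP=> c_gt c_lt; split; first by rewrite acos_gt0 // ltW.
  by rewrite acos_ltpi // c_gt ltW.
by rewrite acosK // in_itv /= !ltW.
Qed.

Lemma acos_cos_0pi (y : R) : 0 < y < pi -> acos (cos y) = y.
Proof. by case/andP=> y0 ypi; rewrite cosK // in_itv /= !ltW. Qed.

End Trigonometry.

Section WalkEigen.
Variables (F : fieldType) (T : finType) (e : rel T).
Hypothesis e_sym : symmetric e.

Definition degree u : F := \sum_(v | e u v) 1.

(* [(D^-1 A) f = c f], for the adjacency matrix [A] and degree matrix [D]. *)
Definition walk_eigen (c : F) (f : T -> F) :=
  forall u, \sum_(v | e u v) (f v - c * f u) = 0.

Definition free_funs m (G : 'I_m -> T -> F) :=
  forall a : 'I_m -> F, (forall u, \sum_i a i * G i u = 0) -> forall i, a i = 0.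

Definition adjmx : 'M[F]_#|T| := \matrix_(i, j) (e (enum_val i) (enum_val j))%:R.
Definition degmx : 'M[F]_#|T| := diag_mx (\row_i degree (enum_val i)).
Definition walkmx (c : F) := adjmx - c *: degmx.
Definition walk_mult (c : F) := (#|T| - \rank (walkmx c))%N.

Definition funmx m (G : 'I_m -> T -> F) : 'M[F]_(m, #|T|) :=
  \matrix_(i, j) G i (enum_val j).

Lemma sum_enum_val (V : nmodType) (G : T -> V) :
  \sum_(i < #|T|) G (enum_val i) = \sum_u G u.
Proof. by rewrite -big_enum_val; apply: eq_bigl => u; rewrite inE. Qed.

Lemma funmx_mul_walk c m (G : 'I_m -> T -> F) i j :
  (funmx G *m walkmx c) i j =
  \sum_(v | e (enum_val j) v) (G i v - c * G i (enum_val j)).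
Proof.
rewrite /walkmx mulmxBr -scalemxAr mul_mx_diag !mxE sumrB; congr (_ - _).
  under eq_bigr => l _ do rewrite !mxE.
  rewrite (sum_enum_val (fun v => G i v * (e v (enum_val j))%:R)) [RHS]big_mkcond.
  by apply: eq_bigr => v _; rewrite e_sym; case: (e _ v); rewrite ?mulr1 ?mulr0.
by rewrite /degree mulr_sumr mulr_sumr; apply: eq_bigr => v _; rewrite mulr1 mulrC.
Qed.

Lemma walk_eigen_funmxP c m (G : 'I_m -> T -> F) :
  (forall i, walk_eigen c (G i)) <-> funmx G *m walkmx c = 0.
Proof.
split=> [G_eig | /matrixP G_eig i u].
  by apply/matrixP => i j; rewrite funmx_mul_walk mxE; apply: G_eig.
by have := G_eig i (enum_rank u); rewrite funmx_mul_walk mxE enum_rankK.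
Qed.

Lemma row_mul_funmx m (a : 'I_m -> F) (G : 'I_m -> T -> F) j :
  ((\row_i a i) *m funmx G) 0 j = \sum_i a i * G i (enum_val j).
Proof. by rewrite mxE; apply: eq_bigr => i _; rewrite !mxE. Qed.

Lemma row_free_funmxP m (G : 'I_m -> T -> F) :
  free_funs G <-> row_free (funmx G).
Proof.
split=> [G_free | B_free a a0 i].
  rewrite -kermx_eq0; apply/eqP/row_matrixP => l; rewrite row0.
  set r := row l _; have rB0 : r *m funmx G = 0 by rewrite -row_mul mulmx_ker row0.
  apply/rowP => i; rewrite [RHS]mxE; apply: (G_free (fun i => r 0 i) _ i) => u.
  have /rowP/(_ (enum_rank u)) := rB0; rewrite !mxE => {2}<-.
  by apply: eq_bigr => k _; rewrite [funmx _ _ _]mxE enum_rankK.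
have : (\row_i a i) *m funmx G = 0.
  by apply/rowP => j; rewrite row_mul_funmx mxE a0.
by rewrite -(mul0mx 1 (funmx G)) => /(row_free_inj B_free)/rowP/(_ i); rewrite !mxE.
Qed.

Lemma walk_multP c m :
  (exists G : 'I_m -> T -> F, (forall i, walk_eigen c (G i)) /\ free_funs G)
  <-> (m <= walk_mult c)%N.
Proof.
rewrite /walk_mult -mxrank_ker; split.
  move=> [G [/walk_eigen_funmxP GK /row_free_funmxP/eqP <-]].
  by apply: mxrankS; apply/sub_kermxP.
set K := kermx _ => m_le.
pose B : 'M[F]_(m, #|T|) := pid_mx m *m row_base K.
have B_rank : \rank B = m by rewrite mxrankMfree ?row_base_free // rank_pid_mx.
have B_K : (B <= K)%MS by apply: submx_trans (submxMl _ _) _; rewrite eq_row_base.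
have funmxB : funmx (fun i u => B i (enum_rank u)) = B.
  by apply/matrixP => i j; rewrite mxE enum_valK.
exists (fun i u => B i (enum_rank u)); split.
  by apply/walk_eigen_funmxP; rewrite funmxB; apply/sub_kermxP.
by apply/row_free_funmxP; rewrite funmxB -row_leq_rank B_rank.
Qed.

Lemma free_funs1 (g : T -> F) : free_funs (fun _ : 'I_1 => g) <-> exists u, g u != 0.
Proof.
split=> [g_free | [u gu_neq0] a a0 i].
  apply/existsP; apply: contraT; rewrite negb_exists => /forallP g_eq0.
  suff : (1 : F) = 0 by move/eqP; rewrite oner_eq0.
  apply: (g_free (fun _ => 1) _ ord0) => u.
  by rewrite big_ord1 mul1r; apply/eqP/negPn/g_eq0.
have := a0 u; rewrite big_ord1 (ord1 i) => /eqP; rewrite mulf_eq0 (negPf gu_neq0) orbF.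
by move/eqP.
Qed.

Lemma walk_mult_gt0 c :
  (0 < walk_mult c)%N <-> exists f, walk_eigen c f /\ exists u, f u != 0.
Proof.
rewrite -(walk_multP c 1); split=> [[G [G_eig]] | [f [f_eig /free_funs1]]].
  have -> : G = fun=> G ord0 by apply/funext => i; rewrite (ord1 i).
  by move/free_funs1; exists (G ord0).
by exists (fun=> f).
Qed.

Lemma walk_mult_eq1 c (z : T -> F) : walk_eigen c z -> (exists u, z u != 0) ->
  (forall f, walk_eigen c f -> exists k, forall u, f u = k * z u) ->
  walk_mult c = 1%N.
Proof.
move=> z_eig z_neq0 z_spans.
have mult_gt0 : (0 < walk_mult c)%N by apply/walk_mult_gt0; exists z.
apply/eqP; rewrite eqn_leq mult_gt0 andbT leqNgt.
apply/negP => /(walk_multP c 2) [G [G_eig G_free]].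
have [[k0 G0E] [k1 G1E]] := (z_spans _ (G_eig ord0), z_spans _ (G_eig ord_max)).
have comb (a : 'I_2 -> F) u :
    \sum_i a i * G i u = (a ord0 * k0 + a ord_max * k1) * z u.
  rewrite !big_ord_recl big_ord0 addr0.
  have -> : lift ord0 ord0 = ord_max :> 'I_2 by apply/val_inj.
  by rewrite G0E G1E; ring.
have k00 : k0 = 0.
  apply/eqP; rewrite -oppr_eq0; apply/eqP.
  apply: (G_free (fun i => if i == ord0 then k1 else - k0) _ ord_max) => u.
  by rewrite comb /=; ring.
suff : (1 : F) = 0 by move/eqP; rewrite oner_eq0.
apply: (G_free (fun i => if i == ord0 then 1 else 0) _ ord0) => u.
by rewrite comb /= k00; ring.
Qed.

End WalkEigen.

Arguments degree {F T} e u.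
Arguments adjmx {F T} e.
Arguments degmx {F T} e.

Section ConnectedWalk.
Variables (R : realFieldType) (T : finType) (e : rel T).
Hypothesis e_sym : symmetric e.
Hypothesis e_nodeg : forall u, exists v, e u v.
Hypothesis e_conn : forall u v, connect e u v.
Variable col : T -> bool.
Hypothesis col_proper : forall u v, e u v -> col u != col v.

Lemma degree_gt0 u : 0 < degree e u :> R.
Proof.
have [v uv] := e_nodeg u.
by rewrite /degree (bigD1 v) //= ltr_pwDl ?sumr_ge0.
Qed.

Lemma walk_eigen_sum c (f : T -> R) u :
  walk_eigen e c f -> \sum_(v | e u v) f v = c * degree e u * f u.
Proof.
move=> /(_ u); rewrite sumrB => /eqP; rewrite subr_eq0 => /eqP ->.
by rewrite /degree -mulrA mulr_suml mulr_sumr; apply: eq_bigr => v _; rewrite mul1r.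
Qed.

Lemma walk_eigen_norm_le1 c (f : T -> R) :
  walk_eigen e c f -> (exists u, f u != 0) -> `|c| <= 1.
Proof.
move=> f_eig [u0 fu0_neq0].
have [x _ xmax] := @arg_maxP _ _ _ u0 predT (fun u => `|f u|) isT.
have fx : 0 < `|f x| by apply: lt_le_trans (xmax u0 isT); rewrite normr_gt0.
have dx := degree_gt0 x.
rewrite -(ler_pM2r (mulr_gt0 dx fx)) mul1r.
have -> : `|c| * (degree e x * `|f x|) = `|\sum_(v | e x v) f v|.
  by rewrite (walk_eigen_sum x f_eig) !normrM (gtr0_norm dx) mulrA.
apply: le_trans (ler_norm_sum _ _ _) _.
by rewrite /degree mulr_suml; apply: ler_sum => v _; rewrite mul1r; apply: xmax.
Qed.

(* At a maximum [x] of [f], [f x] is the mean of the values at the neighbours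
   of [x], so they all equal [f x]. *)
Lemma walk_eigen1_max_nbr (f : T -> R) x : walk_eigen e 1 f ->
  (forall v, f v <= f x) -> forall v, e x v -> f v = f x.
Proof.
move=> /(_ x) f_mean fmax v xv.
have dev_sum : \sum_(w | e x w) (f x - f w) = 0.
  apply/eqP; rewrite -oppr_eq0 -sumrN; apply/eqP; rewrite -[RHS]f_mean.
  by apply: eq_bigr => w _; rewrite mul1r opprB.
have dev_ge0 w : e x w -> 0 <= f x - f w by rewrite subr_ge0.
have := psumr_eq0P dev_ge0 dev_sum xv.
by move/eqP; rewrite subr_eq0 => /eqP.
Qed.

Lemma walk_eigen1_const (f : T -> R) : walk_eigen e 1 f -> forall u v, f u = f v.
Proof.
move=> f_eig u v.
have [x _ xmax] := @arg_maxP _ _ _ u predT f isT.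
have fmax w : f w <= f x by apply: xmax.
have level_closed : closed_mem e (mem [pred y | f y == f x]).
  move=> y z yz /=; apply/eqP/eqP => fy.
    by rewrite -fy; apply: (walk_eigen1_max_nbr f_eig) => // w; rewrite fy.
  by rewrite -fy; apply: (walk_eigen1_max_nbr f_eig); rewrite 1?e_sym // => w; rewrite fy.
have := closed_connect level_closed (e_conn x u).
have := closed_connect level_closed (e_conn x v).
by rewrite !inE eqxx => /esym/eqP -> /esym/eqP ->.
Qed.

Lemma sign_col_nbr u v : e u v -> (-1) ^+ col v = - (-1) ^+ col u :> R.
Proof. by move/col_proper; case: (col u); case: (col v); rewrite ?opprK. Qed.

Lemma walk_eigen_sign c (f : T -> R) :
  walk_eigen e c f -> walk_eigen e (- c) (fun u => (-1) ^+ col u * f u).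
Proof.
move=> f_eig u; have := congr1 (GRing.mul (- (-1) ^+ col u)) (f_eig u).
rewrite mulr0 mulr_sumr => {2}<-.
by apply: eq_bigr => v uv; rewrite (sign_col_nbr uv); ring.
Qed.

Lemma walk_mult1 (u0 : T) : walk_mult e (1 : R) = 1%N.
Proof.
apply: (@walk_mult_eq1 _ _ _ e_sym 1 (fun _ => 1)).
- by move=> u; apply: big1 => v _; rewrite mulr1 subrr.
- by exists u0; rewrite oner_eq0.
- by move=> f f_eig; exists (f u0) => u; rewrite mulr1 (walk_eigen1_const f_eig u u0).
Qed.

Lemma walk_multN1 (u0 : T) : walk_mult e (-1 : R) = 1%N.
Proof.
apply: (@walk_mult_eq1 _ _ _ e_sym (-1) (fun u => (-1) ^+ col u)).
- by move=> u; apply: big1 => v uv; rewrite (sign_col_nbr uv); ring.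
- by exists u0; rewrite signr_eq0.
move=> f /walk_eigen_sign; rewrite opprK => f_eig.
exists ((-1) ^+ col u0 * f u0) => u.
by rewrite (walk_eigen1_const f_eig u0 u) mulrAC -expr2 sqrr_sign mul1r.
Qed.

End ConnectedWalk.

Section WalkSpectrum.
Variables (R : rcfType) (T : finType) (e : rel T).
Hypothesis e_sym : symmetric e.
Hypothesis e_nodeg : forall u, exists v, e u v.

Definition degmx_isqrt : 'M[R]_#|T| :=
  diag_mx (\row_i (Num.sqrt (degree e (enum_val i)))^-1).

Lemma degmx_isqrt_unit : degmx_isqrt \in unitmx.
Proof.
rewrite unitmxE det_diag unitfE; apply/prodf_neq0 => i _.
by rewrite mxE invr_eq0 gt_eqF // sqrtr_gt0 degree_gt0.
Qed.

Lemma degmx_isqrt_walkmx c :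
  degmx_isqrt *m walkmx e c *m degmx_isqrt =
  degmx_isqrt *m adjmx e *m degmx_isqrt - c%:M.
Proof.
rewrite /walkmx mulmxBr mulmxBl -scalemxAr -scalemxAl -scalemx1; congr (_ - c *: _).
rewrite /degmx !mulmx_diag -diag_const_mx; congr diag_mx; apply/rowP => j.
have dj := degree_gt0 R e_nodeg (enum_val j).
have sj : Num.sqrt (degree e (enum_val j) : R) != 0 by rewrite sqrtr_eq0 -ltNge.
by rewrite !mxE -{2}[degree e _]sqr_sqrtr ?ltW //; field.
Qed.

Lemma degmx_isqrt_adjmx_sym :
  (degmx_isqrt *m adjmx e *m degmx_isqrt)^T = degmx_isqrt *m adjmx e *m degmx_isqrt.
Proof.
rewrite !trmx_mul tr_diag_mx mulmxA; congr (_ *m _ *m _).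
by apply/matrixP => i j; rewrite !mxE e_sym.
Qed.

(* [D^-1/2 (A - c D) D^-1/2] is [S - c] for the real symmetric matrix
   [S = D^-1/2 A D^-1/2], whose eigenvalues are real with multiplicities
   adding up to [#|T|]. *)
Lemma walk_mult_spectrum :
  exists r : seq R, size r = #|T| /\ forall c, walk_mult e c = count_mem c r.
Proof.
pose S := degmx_isqrt *m adjmx e *m degmx_isqrt.
pose SC := map_mx (real_complex R) S.
have SC_herm : SC \is hermsymmx.
  apply: realsym_hermsym.
    apply/is_hermitianmxP; rewrite expr0 scale1r map_mx_id //.
    by rewrite map_trmx degmx_isqrt_adjmx_sym.
  by apply/mxOverP => i j; rewrite mxE complex_real.
have /mxOverP d_real := hermitian_spectral_diag_real SC_herm.
have /orthomx_spectralP SC_diag := hermitian_normalmx SC_herm.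
set P := spectralmx SC in SC_diag; set d := spectral_diag SC in SC_diag d_real.
have Pu : P \in unitmx by apply: spectral_unit.
exists [seq complex.Re (d 0 i) | i <- enum 'I_#|T|].
split; first by rewrite size_map size_enum_ord.
move=> c; rewrite /walk_mult -(mxrank_unitMM _ degmx_isqrt_unit degmx_isqrt_unit).
rewrite degmx_isqrt_walkmx -(mxrank_map (real_complex R)) map_mxB map_scalar_mx -/SC.
have -> : SC - (real_complex R c)%:M = invmx P *m (diag_mx d - (real_complex R c)%:M) *m P.
  by rewrite mulmxBr mulmxBl -SC_diag mul_mx_scalar -scalemxAl mulVmx // scalemx1.
rewrite mxrank_unitMM ?unitmx_inv // corank_diag_sub.
rewrite count_map -sum1_count big_enum_cond [RHS]big_mkcond /=; apply: eq_bigr => i _.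
by rewrite -(RRe_real (d_real 0 i)) (inj_eq (@complexI _)) eq_sym; case: eqP.
Qed.

Lemma walk_mult_open_spectrum (e_conn : forall u v, connect e u v)
    (col : T -> bool) (col_proper : forall u v, e u v -> col u != col v) (u0 : T) :
  exists r : seq R,
  [/\ size r = (#|T| - 2)%N, {subset r <= [pred c | -1 < c < 1]} &
      forall c, -1 < c < 1 -> walk_mult e c = count_mem c r].
Proof.
have [r [size_r mult_r]] := walk_mult_spectrum.
pose P := [pred c : R | -1 < c < 1].
have notP_r : {in r, forall c, ~~ P c = (c == 1) || (c == -1)}.
  move=> c cr; have /(walk_mult_gt0 e_sym) [f [ef f0]] : (0 < walk_mult e c)%N.
    by rewrite mult_r -has_count has_pred1.
  have := walk_eigen_norm_le1 e_nodeg ef f0; rewrite ler_norml => /andP[c_ge c_le].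
  by rewrite /P inE !lt_neqAle c_ge c_le !andbT negb_and !negbK orbC [-1 == c]eq_sym.
have count_notP : count (predC P) r = 2%N.
  have := count_predUI (pred1 1) (pred1 (-1)) r.
  rewrite -!mult_r (walk_mult1 R e_sym e_conn u0) (walk_multN1 R e_sym e_conn col_proper u0).
  rewrite (@eq_count _ (predI _ _) pred0) => [|x /=]; last first.
    by apply/negbTE/andP => -[/eqP -> /eqP]; lra.
  by rewrite count_pred0 addn0 (eq_in_count notP_r).
exists [seq c <- r | P c]; split.
- by rewrite size_filter -size_r -(count_predC P r) count_notP addnK.
- by move=> c; rewrite mem_filter => /andP[].
- move=> c Pc; rewrite mult_r count_filter; apply: eq_count => x /=.
  by case: eqP => // ->; rewrite Pc.
Qed.

End WalkSpectrum.

Section Sinusoid.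
Variable R : realType.

Definition sinusoid (k a b : R) (x : R) : R := a * cos (k * x) + b * sin (k * x).

Lemma is_derive_mull (k x : R) : is_derive x 1 (fun y : R => k * y) k.
Proof.
have : is_derive x (1 : R) (k *: id) (k *: (1 : R)) by apply: is_deriveZ.
by rewrite [k *: 1]mulr1.
Qed.

Lemma is_derive_sinusoid (k a b x : R) :
  is_derive x 1 (sinusoid k a b) (sinusoid k (b * k) (- (a * k)) x).
Proof.
have dcos := is_derive1_comp (is_derive_cos (k * x)) (is_derive_mull k x).
have dsin := is_derive1_comp (is_derive_sin (k * x)) (is_derive_mull k x).
apply: is_derive_eq (is_deriveD (is_deriveZ a dcos) (is_deriveZ b dsin)) _.
by rewrite /sinusoid /GRing.scale /=; ring.
Qed.

Lemma derive1_sinusoid (k a b : R) : derive1 (sinusoid k a b) = sinusoid k (b * k) (- (a * k)).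
Proof.
by apply/funext => x; rewrite derive1E (@derive_val _ _ _ _ _ _ _ (is_derive_sinusoid k a b x)).
Qed.

Lemma derivable_sinusoid (k a b x : R) : derivable (sinusoid k a b) x 1.
Proof. exact: (@ex_derive _ _ _ _ _ _ _ (is_derive_sinusoid k a b x)). Qed.

Lemma continuous_sinusoid (k a b : R) : continuous (sinusoid k a b).
Proof. by move=> x; apply/differentiable_continuous/derivable1_diffP/derivable_sinusoid. Qed.

Lemma sinusoid0 (k a b : R) : sinusoid k a b 0 = a.
Proof. by rewrite /sinusoid mulr0 cos0 sin0 mulr1 mulr0 addr0. Qed.

Lemma sinusoid1 (k a b : R) : sinusoid k a b 1 = a * cos k + b * sin k.
Proof. by rewrite /sinusoid mulr1. Qed.

Lemma is_derive0_itv_cst (W : R -> R) (a b : R) :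
  (forall x, a < x < b -> is_derive x 1 W 0) ->
  forall x y, a < x < b -> a < y < b -> W x = W y.
Proof.
move=> W'0; suff le_cst x y : a < x < b -> a < y < b -> x <= y -> W x = W y.
  by move=> x y ax ay; case: (leP x y) => [|/ltW] xy; [|apply/esym]; apply: le_cst.
move=> /andP[ax _] /andP[_ yb] xy.
have in_ab z : x <= z <= y -> a < z < b.
  by case/andP=> xz zy; rewrite (lt_le_trans ax xz) (le_lt_trans zy yb).
have W'0_xy z : z \in `]x, y[ -> is_derive z 1 W 0.
  by rewrite in_itv /= => /andP[xz zy]; apply/W'0/in_ab; rewrite !ltW.
have Wc : {within `[x, y], continuous W}.
  apply: derivable_within_continuous => z; rewrite in_itv /= => /in_ab /W'0 W'z.
  exact: (@ex_derive _ _ _ _ _ _ _ W'z).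
have [z _] := MVT_segment xy W'0_xy Wc.
by rewrite mul0r => /eqP; rewrite subr_eq0 => /eqP.
Qed.

Lemma continuous_itv_cc_eq (g h : R -> R) (a b : R) : a < b ->
  {within `[a, b], continuous g} -> continuous h ->
  (forall x, a < x < b -> g x = h x) -> forall x, a <= x <= b -> g x = h x.
Proof.
move=> ab gc hc gh x /andP[ax xb].
have [_ ga gb] := (continuous_within_itvP g ab).1 gc.
have [<-|ax'] := eqVneq a x.
  apply: (cvg_unique (@Rhausdorff R) (F := g @ a^'+)) ga _.
  apply: cvg_trans (cvg_at_right_filter (hc a)).
  apply: near_eq_cvg; near=> y; apply/esym/gh; apply/andP; split.
    by near: y; apply: nbhs_right_gt.
  by near: y; apply: nbhs_right_lt.
have [->|xb'] := eqVneq x b.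
  apply: (cvg_unique (@Rhausdorff R) (F := g @ b^'-)) gb _.
  apply: cvg_trans (cvg_at_left_filter (hc b)).
  apply: near_eq_cvg; near=> y; apply/esym/gh; apply/andP; split.
    by near: y; apply: nbhs_left_gt.
  by near: y; apply: nbhs_left_lt.
by apply: gh; rewrite !lt_neqAle ax' xb' ax xb.
Unshelve. all: by end_near.
Qed.

(* [W = g' sin (k x) - k g cos (k x)] and [V = g' cos (k x) + k g sin (k x)]
   are first integrals of [g'' = - k^2 g], and [k g = V sin (k x) - W cos (k x)]. *)
Lemma harmonic_ode_sinusoid (k : R) (g : R -> R) : 0 < k ->
  {within `[0, 1], continuous g} ->
  (forall x, 0 < x < 1 -> [/\ derivable g x 1, derivable (derive1 g) x 1 &
       - derive1 (derive1 g) x = k ^+ 2 * g x]) ->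
  exists a b, forall x, 0 <= x <= 1 -> g x = sinusoid k a b x.
Proof.
move=> k0 gc g_ode.
set g1 := derive1 g.
have dg (x : R) : 0 < x < 1 -> is_derive x 1 g (g1 x).
  by case/g_ode => dg _ _; rewrite /g1 derive1E; apply: derivableP.
have dg1 (x : R) : 0 < x < 1 -> is_derive x 1 g1 (- (k ^+ 2 * g x)).
  by case/g_ode => _ dg1 <-; rewrite opprK derive1E; apply: derivableP.
have dcos (x : R) := is_derive1_comp (is_derive_cos (k * x)) (is_derive_mull k x).
have dsin (x : R) := is_derive1_comp (is_derive_sin (k * x)) (is_derive_mull k x).
pose W := g1 * (fun y => sin (k * y)) - (k *: g) * (fun y => cos (k * y)).
pose V := g1 * (fun y => cos (k * y)) + (k *: g) * (fun y => sin (k * y)).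
have dW (x : R) : 0 < x < 1 -> is_derive x 1 W 0.
  move=> x01; apply: is_derive_eq (is_deriveB (is_deriveM (dg1 x x01) (dsin x))
                                   (is_deriveM (is_deriveZ k (dg x x01)) (dcos x))) _.
  by rewrite /= /GRing.scale /=; ring.
have dV (x : R) : 0 < x < 1 -> is_derive x 1 V 0.
  move=> x01; apply: is_derive_eq (is_deriveD (is_deriveM (dg1 x x01) (dcos x))
                                   (is_deriveM (is_deriveZ k (dg x x01)) (dsin x))) _.
  by rewrite /= /GRing.scale /=; ring.
have half01 : 0 < (2^-1 : R) < 1 by apply/andP; split; lra.
have kN0 : k != 0 by rewrite gt_eqF.
exists (- W 2^-1 / k), (V 2^-1 / k).
apply: (continuous_itv_cc_eq ltr01 gc (@continuous_sinusoid _ _ _)) => x x01.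
rewrite -(is_derive0_itv_cst dW x01 half01) -(is_derive0_itv_cst dV x01 half01).
apply: (mulfI kN0); rewrite /sinusoid /W /V /= /GRing.scale /=.
rewrite -[LHS]mulr1 -(cos2Dsin2 (k * x)) !fctE /= /GRing.scale /=.
by field.
Qed.

End Sinusoid.

Section EigenCorrespondence.
Variables (R : realType) (T : finType) (e : rel T).
Hypothesis e_sym : symmetric e.
Hypothesis e_nodeg : forall u, exists v, e u v.
Variable k : R.
Hypothesis k_gt0 : 0 < k.
Hypothesis sink_neq0 : sin k != 0.

Definition nbr u : T := xchoose (e_nodeg u).

Lemma nbrP u : e u (nbr u). Proof. exact: xchooseP. Qed.

(* For an eigenfunction, continuity at [u] makes the choice of edge irrelevant. *)
Definition vertex_val (f : gfun R T) u := f u (nbr u) 0.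

(* The solution of [- f'' = k^2 f] on the edge [u v] with [f 0 = F u] and
   [f 1 = F v]; it is unique since [sin k != 0]. *)
Definition edge_interp (F : T -> R) : gfun R T :=
  fun u v => sinusoid k (F u) ((F v - F u * cos k) / sin k).

Lemma edge_interp0 F u v : edge_interp F u v 0 = F u.
Proof. exact: sinusoid0. Qed.

Lemma has_outder_sinusoid (f : gfun R T) u v a b :
  (forall x, 0 <= x <= 1 -> f u v x = sinusoid k a b x) -> has_outder f u v (b * k).
Proof.
move=> fE; have D := is_derive_sinusoid k a b 0.
have : (fun h : R => h^-1 *: (sinusoid k a b (h *: 1 + 0) - sinusoid k a b 0)) @ 0^'
         --> b * k.
  have -> : b * k = sinusoid k (b * k) (- (a * k)) 0 by rewrite sinusoid0.
  by rewrite -(@derive_val _ _ _ _ _ _ _ D); apply: (@ex_derive _ _ _ _ _ _ _ D).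
move/cvg_dnbhs_at_right; apply: cvg_trans; apply: near_eq_cvg; near=> h.
have h0 : 0 < h by near: h; apply: nbhs_right_gt.
have h1 : h < 1 by near: h; apply: nbhs_right_lt; apply: ltr01.
rewrite /= !fE ?lexx ?ler01 ?ltW //.
by rewrite addr0 /GRing.scale /= mulr1 mulrC.
Unshelve. all: by end_near.
Qed.

Lemma has_outder_unique (f : gfun R T) u v d d' :
  has_outder f u v d -> has_outder f u v d' -> d = d'.
Proof. exact: (cvg_unique (@Rhausdorff R)). Qed.

Lemma eigfun_edge_interp f : in_eigspace e (k ^+ 2) f ->
  forall u v, e u v -> forall x, 0 <= x <= 1 -> f u v x = edge_interp (vertex_val f) u v x.
Proof.
case=> f_sym f_cont f_ode f_vert _ u v uv.
have [a [b fE]] := harmonic_ode_sinusoid k_gt0 (f_cont u v uv) (f_ode u v uv).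
have in01_0 : 0 <= (0 : R) <= 1 by rewrite lexx ler01.
have in01_1 : 0 <= (1 : R) <= 1 by rewrite lexx ler01.
have fu : a = vertex_val f u.
  by rewrite /vertex_val -(f_vert u v (nbr u) uv (nbrP u)) fE ?sinusoid0 ?in01_0.
have fv : vertex_val f v = a * cos k + b * sin k.
  rewrite -sinusoid1 -fE ?in01_1 // f_sym ?subrr ?in01_1 //.
  by rewrite /vertex_val (f_vert v u (nbr v)) ?nbrP // e_sym.
move=> x x01; rewrite fE // /edge_interp -fu fv; congr sinusoid.
by rewrite addrAC subrr add0r mulfK.
Qed.

Lemma eigfun_walk_eigen f : in_eigspace e (k ^+ 2) f -> walk_eigen e (cos k) (vertex_val f).
Proof.
move=> ef; have fE := eigfun_edge_interp ef.
case: ef => _ _ _ _ [d [f_der d_sum]] u.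
have dE v : e u v -> d u v = (vertex_val f v - vertex_val f u * cos k) / sin k * k.
  move=> uv; apply: has_outder_unique (f_der u v uv) _.
  exact: has_outder_sinusoid (fE u v uv).
have := d_sum u; rewrite (eq_bigr _ dE) -!mulr_suml => /eqP.
rewrite !mulf_eq0 invr_eq0 (negPf sink_neq0) (gt_eqF k_gt0) !orbF => /eqP d0.
by rewrite -[RHS]d0; apply: eq_bigr => v _; rewrite mulrC.
Qed.

Lemma edge_interp_eigfun F : walk_eigen e (cos k) F -> in_eigspace e (k ^+ 2) (edge_interp F).
Proof.
move=> eF; split.
- move=> u v _ x _; rewrite /edge_interp /sinusoid mulrBr mulr1 cosB sinB.
  apply/eqP; rewrite -subr_eq0; apply/eqP.
  transitivity (F v * sin (k * x) / sin k * (1 - (cos k ^+ 2 + sin k ^+ 2))); first by field.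
  by rewrite cos2Dsin2 subrr mulr0.
- by move=> u v _; apply: continuous_subspaceT; apply: continuous_sinusoid.
- move=> u v _ x _; rewrite /edge_interp !derive1_sinusoid; split.
  + exact: derivable_sinusoid.
  + exact: derivable_sinusoid.
  + by rewrite /sinusoid; ring.
- by move=> u v w _ _; rewrite !edge_interp0.
exists (fun u v => (F v - F u * cos k) / sin k * k); split.
  by move=> u v _; apply: has_outder_sinusoid.
move=> u; rewrite -!mulr_suml.
have -> : \sum_(v | e u v) (F v - F u * cos k) = 0.
  by rewrite -[RHS](eF u); apply: eq_bigr => v _; rewrite mulrC.
by rewrite !mul0r.
Qed.

Lemma sum_edge_interp m (a : 'I_m -> R) (G : 'I_m -> T -> R) u v x :
  \sum_i a i * edge_interp (G i) u v x = edge_interp (fun w => \sum_i a i * G i w) u v x.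
Proof.
rewrite /edge_interp /sinusoid (eq_bigr (fun i => a i * G i u * cos (k * x) +
  (a i * G i v * (sin (k * x) / sin k) - a i * G i u * (cos k * sin (k * x) / sin k)))).
  by rewrite big_split sumrB /= -!mulr_suml; field.
by move=> i _; field.
Qed.

Lemma lin_indep1 (f : gfun R T) : lin_indep e (fun _ : 'I_1 => f) <-> gnonzero e f.
Proof.
split=> [f_indep | [u [v [x [uv x01 fx]]]] a a0 i].
  apply: contrapT => f0; suff : (1 : R) = 0 by move/eqP; rewrite oner_eq0.
  apply: (f_indep (fun _ => 1) _ ord0) => u v x uv x01; rewrite big_ord1 mul1r.
  by apply/eqP; apply: contraT => fx; case: f0; exists u, v, x.
have := a0 u v x uv x01; rewrite big_ord1 (ord1 i) => /eqP.
by rewrite mulf_eq0 (negPf fx) orbF => /eqP.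
Qed.

Lemma qg_free_walk_mult m :
  (exists F : 'I_m -> gfun R T, (forall i, in_eigspace e (k ^+ 2) (F i)) /\ lin_indep e F)
  <-> (m <= walk_mult e (cos k))%N.
Proof.
rewrite -walk_multP //; split=> [[F [eF F_indep]] | [G [eG G_free]]].
  exists (fun i => vertex_val (F i)); split=> [i | a a0].
    exact: eigfun_walk_eigen.
  apply: F_indep => u v x uv x01.
  under eq_bigr => i _ do rewrite (eigfun_edge_interp (eF i) uv x01).
  by rewrite sum_edge_interp (funext a0) /edge_interp /sinusoid; ring.
exists (fun i => edge_interp (G i)); split=> [i | a a0].
  exact: edge_interp_eigfun.
apply: G_free => u; have := a0 u (nbr u) 0 (nbrP u); rewrite lexx ler01 => /(_ isT).
by under eq_bigr do rewrite edge_interp0.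
Qed.

Lemma qg_multE m : qg_mult e (k ^+ 2) m <-> m = walk_mult e (cos k).
Proof.
split=> [[/qg_free_walk_mult m_le m1_nfree] | ->].
  apply/eqP; rewrite eqn_leq m_le leqNgt; apply/negP => /qg_free_walk_mult [F [eF]].
  exact: m1_nfree.
split=> [|F eF F_indep]; first exact/qg_free_walk_mult.
suff : (walk_mult e (cos k) < walk_mult e (cos k))%N by rewrite ltnn.
by apply/qg_free_walk_mult; exists F.
Qed.

Lemma qg_eigenvalueE : qg_eigenvalue e (k ^+ 2) <-> (0 < walk_mult e (cos k))%N.
Proof.
rewrite -qg_free_walk_mult; split=> [[f [ef /lin_indep1 f_indep]] | [F [eF]]].
  by exists (fun=> f).
have -> : F = fun=> F ord0 by apply/funext => i; rewrite (ord1 i).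
by move/lin_indep1; exists (F ord0).
Qed.

End EigenCorrespondence.

Section QuantumGraphSpectrum.
Variables (R : realType) (T : finType) (e : rel T).
Hypothesis e_sym : symmetric e.
Hypothesis e_nodeg : forall u, exists v, e u v.

Lemma qg_cos_equiv (k k' : R) : 0 < k -> 0 < k' -> sin k != 0 -> sin k' != 0 ->
  cos k = cos k' ->
  (qg_eigenvalue e (k ^+ 2) <-> qg_eigenvalue e (k' ^+ 2)) /\
  (forall m, qg_mult e (k ^+ 2) m <-> qg_mult e (k' ^+ 2) m).
Proof.
move=> k0 k'0 sk sk' ckk'; split=> [|m].
  by rewrite !qg_eigenvalueE // ckk'.
by rewrite !qg_multE // ckk'.
Qed.

Lemma qg_eigenvalue_reflect (lam : R) : pi ^+ 2 < lam < (2 * pi) ^+ 2 ->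
  qg_eigenvalue e lam ->
  exists mu : R, [/\ 0 < mu < pi ^+ 2, qg_eigenvalue e mu,
                     lam = (2 * pi - Num.sqrt mu) ^+ 2 &
                     forall m : nat, qg_mult e lam m <-> qg_mult e mu m].
Proof.
move=> lam_itv e_lam; have pi0 := pi_gt0 R.
have [k_gt k_lt kE] := sqrtr_itv (ltW pi0) (mulr_ge0 (ler0n _ 2) (ltW pi0)) lam_itv.
set k := Num.sqrt lam in k_gt k_lt kE *; set k' := 2 * pi - k.
have k'_itv : 0 < k' < pi by apply/andP; split; rewrite /k'; lra.
have sk : sin k != 0 by rewrite -[k](subKr (2 * pi)) sin_2piB oppr_eq0 sin_neq0_0pi.
have [eqv mult_eqv] := qg_cos_equiv (lt_trans pi0 k_gt) (proj1 (andP k'_itv)) sk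
  (sin_neq0_0pi k'_itv) (esym (cos_2piB k)).
exists (k' ^+ 2); split.
- by case/andP: k'_itv => k'0 k'pi; apply/andP; split; nra.
- by apply/eqv; rewrite kE.
- by rewrite sqrtr_sqr gtr0_norm ?subKr // (proj1 (andP k'_itv)).
- by move=> m; rewrite -kE; apply: mult_eqv.
Qed.

Hypothesis e_conn : forall u v, connect e u v.
Variable col : T -> bool.
Hypothesis col_proper : forall u v, e u v -> col u != col v.
Variable u0 : T.

Lemma qg_count_branch (a b : R) (g : R -> R) :
  (forall c, -1 < c < 1 -> [/\ 0 < g c, sin (g c) != 0, cos (g c) = c & a < g c ^+ 2 < b]) ->
  (forall x, a < x < b -> exists2 c, -1 < c < 1 & x = g c ^+ 2) ->
  qg_count e a b (#|T| - 2).
Proof.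
move=> g_spec g_onto.
have [r [size_r r_open mult_r]] :=
  walk_mult_open_spectrum R e_sym e_nodeg e_conn col_proper u0.
exists [seq (g c ^+ 2, count_mem c r) | c <- undup r]; split.
- rewrite -map_comp map_inj_in_uniq ?undup_uniq // => c c' /=; rewrite !mem_undup.
  move=> /r_open c_itv /r_open c'_itv /eqP.
  have [g0 _ gc _] := g_spec c c_itv; have [g0' _ gc' _] := g_spec c' c'_itv.
  by rewrite eqrXn2 ?ltW // => /eqP gcc'; rewrite -gc -gc' gcc'.
- move=> x; rewrite -map_comp; split.
    case=> /g_onto [c c_itv ->]; have [g0 sg cg _] := g_spec c c_itv.
    rewrite qg_eigenvalueE // cg mult_r // -has_count has_pred1 => cr.
    by apply/mapP; exists c; rewrite ?mem_undup.
  case/mapP => c; rewrite mem_undup => cr ->.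
  have c_itv : -1 < c < 1 by apply: r_open.
  have [g0 sg cg g_ab] := g_spec c c_itv; split => //.
  by rewrite qg_eigenvalueE // cg mult_r // -has_count has_pred1.
- move=> p /mapP [c]; rewrite mem_undup => cr ->.
  have c_itv : -1 < c < 1 by apply: r_open.
  have [g0 sg cg _] := g_spec c c_itv.
  by rewrite qg_multE // cg mult_r.
- by rewrite big_map sum_count_undup size_r.
Qed.

Lemma qg_count_low : qg_count e (0 : R) (pi ^+ 2) (#|T| - 2).
Proof.
have pi0 := pi_gt0 R.
apply: (qg_count_branch (g := acos)) => [c /acos_itv [a0 api cE] | x x_itv].
  have a_itv : 0 < acos c < pi by rewrite a0.
  by split=> //; [apply: sin_neq0_0pi | apply/andP; split; nra].
have x_itv' : 0 ^+ 2 < x < pi ^+ 2 by rewrite [0 ^+ 2]expr2 mulr0.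
have [k0 kpi kE] := sqrtr_itv (lexx 0) (ltW pi0) x_itv'.
have k_itv : 0 < Num.sqrt x < pi by rewrite k0.
by exists (cos (Num.sqrt x)); [apply: cos_gtN1_lt1 | rewrite acos_cos_0pi].
Qed.

Lemma qg_count_high : qg_count e (pi ^+ 2 : R) ((2 * pi) ^+ 2) (#|T| - 2).
Proof.
have pi0 := pi_gt0 R.
apply: (qg_count_branch (g := fun c => 2 * pi - acos c)).
  move=> c /acos_itv [a0 api cE].
  have a_itv : 0 < acos c < pi by rewrite a0.
  split; first by lra.
  - by rewrite sin_2piB oppr_eq0 sin_neq0_0pi.
  - by rewrite cos_2piB.
  - by apply/andP; split; nra.
move=> x x_itv.
have [k_gt k_lt kE] := sqrtr_itv (ltW pi0) (mulr_ge0 (ler0n _ 2) (ltW pi0)) x_itv.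
have k'_itv : 0 < 2 * pi - Num.sqrt x < pi by apply/andP; split; lra.
exists (cos (2 * pi - Num.sqrt x)); first exact: cos_gtN1_lt1.
by rewrite acos_cos_0pi // subKr.
Qed.

End QuantumGraphSpectrum.

Lemma qg_eigenvalue_edgeless (R : realType) (T : finType) (e : rel T) (lam : R) :
  (forall u v, ~~ e u v) -> ~ qg_eigenvalue e lam.
Proof. by move=> noedge [f [_ [u [v [x [uv _ _]]]]]]; rewrite (negPf (noedge u v)) in uv. Qed.

Lemma qg_count_edgeless (R : realType) (T : finType) (e : rel T) (a b : R) :
  (forall u v, ~~ e u v) -> qg_count e a b 0.
Proof.
move=> noedge; exists [::]; split=> //; last by rewrite big_nil.
by move=> x; split=> // -[_ /(qg_eigenvalue_edgeless noedge)].
Qed.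

Theorem theorem2p4 (R : realType) (T : finType) (e : rel T)
  (e_sym : symmetric e) (e_irr : irreflexive e)
  (e_conn : forall u v : T, connect e u v)
  (e_bip : exists c : T -> bool, forall u v, e u v -> c u != c v) :
  @qg_count R T e 0 (pi ^+ 2) (#|T| - 2)%N /\
  @qg_count R T e (pi ^+ 2) ((2 * pi) ^+ 2) (#|T| - 2)%N /\
  (forall lam : R, pi ^+ 2 < lam < (2 * pi) ^+ 2 -> @qg_eigenvalue R T e lam ->
     exists mu : R, [/\ 0 < mu < pi ^+ 2, @qg_eigenvalue R T e mu,
                        lam = (2 * pi - Num.sqrt mu) ^+ 2 &
                        forall m : nat, @qg_mult R T e lam m <-> @qg_mult R T e mu m]).
Proof.
have [col col_proper] := e_bip.
have [T_le1 | T_gt1] := leqP #|T| 1.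
  have noedge := card_le1_edgeless e_irr T_le1.
  have -> : (#|T| - 2 = 0)%N by apply/eqP; rewrite subn_eq0 (leq_trans T_le1).
  split; [exact: qg_count_edgeless | split; first exact: qg_count_edgeless].
  by move=> lam _ /(qg_eigenvalue_edgeless noedge).
have e_nodeg := connected_nodeg e_conn T_gt1.
have [u0 _] : exists u0 : T, true by case/card_gt1P: T_gt1 => u0 _; exists u0.
split; [|split].
- exact: (qg_count_low R e_sym e_nodeg e_conn col_proper u0).
- exact: (qg_count_high R e_sym e_nodeg e_conn col_proper u0).
- exact: (qg_eigenvalue_reflect e_sym e_nodeg).
Qed.
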